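(* Let $A,F_1,\dots,F_k,B$ be a sequence of faces of $\mathcal{C}$, all of the same dimension, such that each face in the sequence opposes the next one. Then the two-sided ideal $Re_AR$ of $R$ generated by $e_A$ contains $e_B$.
   Context: Let $\mathcal{H}$ be a finite arrangement of linear hyperplanes in $\mathbb{R}^n$, each $H$ cut out by a fixed real linear form $f_H$, with sign vectors $\sigma(x)\in\{+,-,0\}^{\mathcal{H}}$. Faces are classes of points with equal sign vector; $\mathcal{C}$ is the set of faces, ordered by $C'\le C$ iff $C'\subseteq\overline{C}$. Two faces $A,B$ of equal dimension $d\ge1$ oppose each other if they have the same linear span and there is a face $C$ of dimension $d-1$, $C\le A$, $C\le B$, with $\sigma(A)_H=-\sigma(B)_H$ for every $H$ with $\sigma(C)_H=0$. $A,B,C$ are collinear if a line segment meets $A,B,C$ in that order. $R$ is the $\mathbb{C}$-algebra generated by $e_C$ ($C\in\mathcal{C}$) with relations $e_C^2=e_C$; $e_Ae_C=e_Ae_Be_C$ for collinear $A,B,C$; $e_Ae_B=e_B=e_Be_A$ for $A\le B$; localised by inverting all $e_Ae_Be_A+(1-e_A)$ with $A,B$ opposing. *)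

From HB Require Import structures.
From mathcomp Require Import all_boot all_order all_algebra.
From mathcomp Require Import all_classical all_reals all_analysis.
From mathcomp.real_closed Require Export complex.
Export numFieldNormedType.Exports.
Set Implicit Arguments. Unset Strict Implicit. Unset Printing Implicit Defensive.
Import Order.TTheory GRing.Theory Num.Theory.
Local Open Scope classical_set_scope.
Local Open Scope ring_scope.

(* A finite arrangement of m linear hyperplanes in R^n (points are row
   vectors 'rV[R]_n); hyperplane H_i is cut out by the real linear form
   x |-> \sum_j f i 0 j * x 0 j. *)

Definition linform (R : realType) (n : nat) (v x : 'rV[R]_n) : R :=
  \sum_(j < n) v 0 j * x 0 j.

(* Well-formedness of the arrangement: forms nonzero and hyperplanes
   pairwise distinct (forms pairwise non-proportional). *)
Definition arrangement (R : realType) (n m : nat) (f : 'I_m -> 'rV[R]_n) : Prop :=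
  (forall i, f i != 0) /\
  (forall i j, (exists c : R, f i = c *: f j) -> i = j).

Definition signvec (R : realType) (n m : nat) (f : 'I_m -> 'rV[R]_n)
  (x : 'rV[R]_n) : {ffun 'I_m -> int} :=
  [ffun i => sgz (linform (f i) x)].

(* A face is represented by its sign vector, which must be realized. *)
Definition is_face (R : realType) (n m : nat) (f : 'I_m -> 'rV[R]_n)
  (s : {ffun 'I_m -> int}) : Prop :=
  exists x, signvec f x = s.

Definition face_pts (R : realType) (n m : nat) (f : 'I_m -> 'rV[R]_n)
  (s : {ffun 'I_m -> int}) : set 'rV[R]_n :=
  [set x | signvec f x = s].

Definition face_le (R : realType) (n m : nat) (f : 'I_m -> 'rV[R]_n)
  (s' s : {ffun 'I_m -> int}) : Prop :=
  face_pts f s' `<=` closure (face_pts f s).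

(* span of face s is contained in span of face t: every subspace (row space
   of an n x n matrix) containing the face t contains the face s. *)
Definition span_sub (R : realType) (n m : nat) (f : 'I_m -> 'rV[R]_n)
  (s t : {ffun 'I_m -> int}) : Prop :=
  forall U : 'M[R]_n,
    (forall x, face_pts f t x -> (x <= U)%MS) ->
    (forall x, face_pts f s x -> (x <= U)%MS).

Definition same_span (R : realType) (n m : nat) (f : 'I_m -> 'rV[R]_n)
  (s t : {ffun 'I_m -> int}) : Prop :=
  span_sub f s t /\ span_sub f t s.

(* dimension of a face = dimension of its linear span, i.e. the least rank
   of a subspace containing it. *)
Definition face_dim (R : realType) (n m : nat) (f : 'I_m -> 'rV[R]_n)
  (s : {ffun 'I_m -> int}) (d : nat) : Prop :=
  (exists U : 'M[R]_n, (forall x, face_pts f s x -> (x <= U)%MS) /\ \rank U = d) /\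
  (forall U : 'M[R]_n, (forall x, face_pts f s x -> (x <= U)%MS) -> (d <= \rank U)%N).

Definition opposes (R : realType) (n m : nat) (f : 'I_m -> 'rV[R]_n)
  (a b : {ffun 'I_m -> int}) : Prop :=
  is_face f a /\ is_face f b /\
  exists d : nat, (1 <= d)%N /\ face_dim f a d /\ face_dim f b d /\
    same_span f a b /\
    exists c, is_face f c /\ face_dim f c d.-1 /\ face_le f c a /\ face_le f c b /\
      forall i, c i = 0 -> a i = - b i.

Definition collinear (R : realType) (n m : nat) (f : 'I_m -> 'rV[R]_n)
  (a b c : {ffun 'I_m -> int}) : Prop :=
  exists (p q : 'rV[R]_n) (ta tb tc : R),
    0 <= ta /\ ta <= tb /\ tb <= tc /\ tc <= 1 /\
    face_pts f a (p + ta *: (q - p)) /\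
    face_pts f b (p + tb *: (q - p)) /\
    face_pts f c (p + tc *: (q - p)).

(* A family (e_C)_C of elements of a C-algebra S satisfying the defining
   relations of R, with the prescribed elements invertible.  Since R is the
   universal such algebra (generators + relations, then universal
   localization), a statement of the form "e_B lies in the two-sided ideal
   of R generated by e_A" is equivalent to its validity for every such
   family in every C-algebra S. *)
Definition R_family (R : realType) (n m : nat) (f : 'I_m -> 'rV[R]_n)
  (S : algType R[i]) (e : {ffun 'I_m -> int} -> S) : Prop :=
  (forall c, is_face f c -> e c * e c = e c) /\
  (forall a b c, is_face f a -> is_face f b -> is_face f c ->
     collinear f a b c -> e a * e c = e a * e b * e c) /\
  (forall a b, is_face f a -> is_face f b -> face_le f a b ->
     e a * e b = e b /\ e b * e a = e b) /\
  (forall a b, opposes f a b ->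
     exists y : S, (e a * e b * e a + (1 - e a)) * y = 1 /\
                   y * (e a * e b * e a + (1 - e a)) = 1).

Definition in_twosided_ideal (T : pzRingType) (a x : T) : Prop :=
  exists l : seq (T * T), x = \sum_(p <- l) p.1 * a * p.2.

(* If A opposes B, idempotency of e_A gives e_A (e_A e_B e_A + (1 - e_A)) = e_A e_B e_A;
   multiplying on the right by the inverse y yields e_A = e_A e_B (e_A y), so e_A lies
   in the ideal generated by e_B.  Opposition is symmetric and ideal membership is
   transitive, so membership propagates along the chain A, F_1, ..., F_k, B. *)

From HB Require Import structures.
From mathcomp Require Import all_boot all_order all_algebra.
From mathcomp Require Import all_classical all_reals all_analysis.
From mathcomp.real_closed Require Import complex.
Import Order.TTheory GRing.Theory Num.Theory.
Local Open Scope ring_scope.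

Section TwoSidedIdeal.
Variable T : pzRingType.

Lemma in_twosided_ideal_id (a : T) : in_twosided_ideal a a.
Proof. by exists [:: (1, 1)]; rewrite big_seq1 mulr1 mul1r. Qed.

Lemma in_twosided_ideal_trans (a b x : T) :
  in_twosided_ideal a b -> in_twosided_ideal b x -> in_twosided_ideal a x.
Proof.
move=> [la ->] [lb ->].
exists [seq (p.1 * q.1, q.2 * p.2) | p <- lb, q <- la].
rewrite big_allpairs_dep; apply: eq_bigr => p _.
rewrite mulr_sumr mulr_suml; apply: eq_bigr => q _ /=.
by rewrite !mulrA.
Qed.

Lemma idempotent_in_ideal_of_corner_unit (a b y : T) :
  b * b = b -> (b * a * b + (1 - b)) * y = 1 -> in_twosided_ideal a b.
Proof.
move=> bb corner_y; exists [:: (b, b * y)]; rewrite big_seq1 /=.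
have corner_b : b * (b * a * b + (1 - b)) = b * a * b.
  by rewrite mulrDr mulrBr mulr1 !mulrA bb subrr addr0.
by rewrite -{1}[b]mulr1 -corner_y mulrA corner_b !mulrA.
Qed.

End TwoSidedIdeal.

Section Opposition.
Variables (R : realType) (n m : nat) (f : 'I_m -> 'rV[R]_n).

Lemma opposes_sym a b : opposes f a b -> opposes f b a.
Proof.
case=> Ha [Hb [d [d1 [da [db [[s1 s2] [c [Hc [dc [ca [cb c0_opp]]]]]]]]]]].
split=> //; split=> //; exists d; do 4 (split=> //).
exists c; do 4 (split=> //).
by move=> i /c0_opp ->; rewrite opprK.
Qed.

Lemma R_family_opposes_in_ideal (S : algType R[i]) (e : {ffun 'I_m -> int} -> S) a b :
  R_family f e -> opposes f a b -> in_twosided_ideal (e b) (e a).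
Proof.
move=> [idem [_ [_ inv]]] ab; have [y [corner_y _]] := inv _ _ ab.
apply: idempotent_in_ideal_of_corner_unit corner_y.
by apply: idem; case: ab.
Qed.

End Opposition.

Theorem lemma4p1 (R : realType) (n m : nat) (f : 'I_m -> 'rV[R]_n)
  (Harr : arrangement f) (k : nat) (F : nat -> {ffun 'I_m -> int})
  (Hfaces : forall i, (i <= k.+1)%N -> is_face f (F i))
  (Hdim : exists d : nat, forall i, (i <= k.+1)%N -> face_dim f (F i) d)
  (Hopp : forall i, (i <= k)%N -> opposes f (F i) (F i.+1)) :
  (* A = F 0, F_1..F_k = F 1..F k, B = F k.+1 *)
  forall (S : algType R[i]) (e : {ffun 'I_m -> int} -> S),
    R_family f e -> in_twosided_ideal (e (F 0%N)) (e (F k.+1)).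
Proof.
move=> S e He.
suff chain i : (i <= k.+1)%N -> in_twosided_ideal (e (F 0%N)) (e (F i)) by exact: chain.
elim: i => [_ | i IH Hi]; first exact: in_twosided_ideal_id.
apply: in_twosided_ideal_trans (IH (ltnW Hi)) _.
by apply: R_family_opposes_in_ideal He _; apply/opposes_sym/Hopp.
Qed.
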